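(* The linear map $\Theta:\mathbf{H}_\mathrm{Pack}\to\mathbf{H}_{\mathrm{Pack}_1}$ defined by $\Theta(M)=\mathrm{Comp}(M)$ for $M\in\mathrm{Pack}$ is a bialgebra morphism from $(\mathbf{H}_\mathrm{Pack},\searrow,\blacktriangle)$ to $(\mathbf{H}_{\mathrm{Pack}_1},\rightarrow,\blacktriangle)$.
   Context: A packed matrix is a matrix with entries in $\mathbb{N}$ with no zero row and no zero column (the empty matrix $1$, with $0$ rows and columns, is packed); $\mathrm{Pack}$ is their set and $\mathbf{H}_\mathrm{Pack}$ the $\mathbb{Q}$-vector space with basis $\mathrm{Pack}$. $\mathcal{M}_{k,l}(\mathbb{N})$ denotes $k\times l$ matrices over $\mathbb{N}$; $p(M)$ is obtained from $M$ by deleting zero rows and columns. On $\mathbf{H}_\mathrm{Pack}$: $M\searrow M'=\begin{pmatrix}M&0\\0&M'\end{pmatrix}$ and, for $M$ with $k$ rows and $l$ columns, $\blacktriangle(M)=\sum_{M',M''\in\mathcal{M}_{k,l}(\mathbb{N}),\ M'+M''=M}p(M')\otimes p(M'')$, $\blacktriangle(1)=1\otimes1$. $\mathrm{Pack}_1$ is the set of packed row matrices $(a_1\ \cdots\ a_l)$, $a_i\geq1$, together with $1$; $\mathbf{H}_{\mathrm{Pack}_1}$ is the $\mathbb{Q}$-vector space with basis $\mathrm{Pack}_1$, with product concatenation $(a_1\cdots a_l)\rightarrow(b_1\cdots b_m)=(a_1\cdots a_lb_1\cdots b_m)$ and coproduct $\blacktriangle(M)=\sum_{M',M''\in\mathcal{M}_{1,l}(\mathbb{N}),\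 M'+M''=M}p(M')\otimes p(M'')$ (this is the Hopf algebra of noncommutative symmetric functions). For $M=(m_{i,j})$ with $k$ rows and $l$ columns, $\mathrm{Comp}(M)$ is the packed row matrix obtained by deleting the zeros from the sequence $(m_{1,1},\dots,m_{1,l},m_{2,1},\dots,m_{k,l})$ (reading the rows in order); $\mathrm{Comp}(1)=1$. *)

(* Free Q-vector spaces are represented by finite formal
   linear combinations (lists of (coefficient, basis element)); two such
   combinations denote the same vector iff all their coefficients agree. *)
From mathcomp Require Import all_boot all_order all_algebra.
Set Implicit Arguments. Unset Strict Implicit. Unset Printing Implicit Defensive.
Import GRing.Theory.

(* A matrix over N, as the list of its rows. *)
Definition mat := seq (seq nat).

Definition ncols (M : mat) : nat := size (head [::] M).
Definition rectangular (M : mat) : bool := all (fun r => size r == ncols M) M.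
Definition nzrow (r : seq nat) : bool := has (fun a => 0 < a) r.
Definition col (M : mat) (j : nat) : seq nat := [seq nth 0 r j | r <- M].

(* packed: no zero row and no zero column (the empty matrix [::] is packed) *)
Definition packed (M : mat) : bool :=
  rectangular M && all nzrow M && all (fun j => nzrow (col M j)) (iota 0 (ncols M)).

(* Pack_1 : packed row matrices (a_1 ... a_l), a_i >= 1, l >= 1, plus 1 = [::] *)
Definition pack1 (M : mat) : bool :=
  match M with
  | [::] => true
  | [:: r] => (0 < size r) && all (fun a => 0 < a) r
  | _ => false
  end.

Definition trmat (M : mat) : mat := [seq col M j | j <- iota 0 (ncols M)].

Definition pmat (M : mat) : mat :=
  trmat [seq c <- trmat [seq r <- M | nzrow r] | nzrow c].

(* M \searrow N: block diagonal matrix *)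
Definition diag (M N : mat) : mat :=
  [seq r ++ nseq (ncols N) 0 | r <- M] ++ [seq nseq (ncols M) 0 ++ r | r <- N].

(* product in H_Pack1: concatenation of row matrices *)
Definition conc (M N : mat) : mat :=
  match flatten M ++ flatten N with [::] => [::] | s => [:: s] end.

Definition Comp (M : mat) : mat :=
  match [seq a <- flatten M | a != 0] with [::] => [::] | s => [:: s] end.

(* all pairs (M', M'') of matrices over N of the same shape as M with M'+M''=M *)
Definition decomp_row (r : seq nat) : seq (seq nat * seq nat) :=
  foldr (fun m acc => [seq (i :: x.1, (m - i) :: x.2) | i <- iota 0 m.+1, x <- acc])
        [:: ([::], [::])] r.
Definition decomp (M : mat) : seq (mat * mat) :=
  foldr (fun r acc => [seq (x.1 :: y.1, x.2 :: y.2) | x <- decomp_row r, y <- acc])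
        [:: ([::], [::])] M.

Definition fvs (B : Type) := seq (rat * B).
Definition coef (B : eqType) (x : fvs B) (b : B) : rat :=
  (\sum_(p <- x | p.2 == b) p.1)%R.
Definition veq (B : eqType) (x y : fvs B) : Prop := forall b, coef x b = coef y b.
Notation "x =v y" := (veq x y) (at level 70).

Definition inHPack (x : fvs mat) : bool := all packed (map snd x).
Definition inHPack1 (x : fvs mat) : bool := all pack1 (map snd x).

Definition bilin (f : mat -> mat -> mat) (x y : fvs mat) : fvs mat :=
  [seq ((p.1 * q.1)%R, f p.2 q.2) | p <- x, q <- y].
Definition mulPack := bilin diag.
Definition mulPack1 := bilin conc.
Definition unitH : fvs mat := [:: (1%R, [::])].

(* linear extension of the coproduct; value in H (x) H, with basis pairs *)
Definition coprod (x : fvs mat) : fvs (mat * mat) :=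
  [seq (p.1, (pmat d.1, pmat d.2)) | p <- x, d <- decomp p.2].
Definition counit (x : fvs mat) : rat := coef x [::].

Definition Theta (x : fvs mat) : fvs mat := [seq (p.1, Comp p.2) | p <- x].
Definition Theta2 (x : fvs (mat * mat)) : fvs (mat * mat) :=
  [seq (p.1, (Comp p.2.1, Comp p.2.2)) | p <- x].

From mathcomp Require Import all_boot all_order all_algebra.
Set Implicit Arguments. Unset Strict Implicit. Unset Printing Implicit Defensive.

(* Comp M depends only on the word of nonzero entries of M read row by row.
   The block-diagonal product M \searrow N reads the rows of M padded with
   zeros, then the rows of N preceded by zeros, so its word is the
   concatenation of the two words.  For the coproduct, splitting M entrywise
   as M' + M'' is the same as splitting its reading word letter by letter; a
   zero letter splits only as 0 + 0 and so contributes nothing after the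
   zeros are deleted, and deleting the zero rows and columns of M' and M''
   (the map p) does not change their words.  Hence both sides of the
   coproduct identity are literally the same list of pairs.  Finally Comp M
   is empty only for the empty packed matrix, which gives the counit. *)

Definition nonzeros (s : seq nat) : seq nat := [seq a <- s | a != 0].

Definition rowmat (s : seq nat) : mat := if s is [::] then [::] else [:: s].

Lemma Comp_rowmat M : Comp M = rowmat (nonzeros (flatten M)).
Proof. by rewrite /Comp /rowmat /nonzeros; case: (filter _ _). Qed.

Lemma conc_rowmat A B : conc A B = rowmat (flatten A ++ flatten B).
Proof. by rewrite /conc /rowmat; case: (_ ++ _). Qed.

Lemma flatten_rowmat s : flatten (rowmat s) = s.
Proof. by case: s => //= a s; rewrite cats0. Qed.

Lemma nonzeros_cat s t : nonzeros (s ++ t) = nonzeros s ++ nonzeros t.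
Proof. exact: filter_cat. Qed.

Lemma nonzeros_nseq0 k : nonzeros (nseq k 0) = [::].
Proof. by rewrite /nonzeros filter_nseq. Qed.

Lemma nonzeros_flatten L : nonzeros (flatten L) = flatten (map nonzeros L).
Proof. exact: filter_flatten. Qed.

Lemma nonzeros_eq_nil r : (nonzeros r == [::]) = ~~ nzrow r.
Proof.
rewrite /nzrow has_filter negbK /nonzeros.
by congr (_ == _); apply: eq_filter => a; rewrite lt0n.
Qed.

Lemma pack1_Comp M : pack1 (Comp M).
Proof.
rewrite Comp_rowmat /nonzeros.
have : all (fun a => a != 0) [seq a <- flatten M | a != 0] by apply: filter_all.
case: (filter _ _) => //= a s /andP[a0 sa]; rewrite lt0n a0 /=.
by apply: sub_all sa => b; rewrite lt0n.
Qed.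

Lemma Comp_diag M N : Comp (diag M N) = conc (Comp M) (Comp N).
Proof.
rewrite conc_rowmat !Comp_rowmat !flatten_rowmat /diag flatten_cat nonzeros_cat.
congr (rowmat (_ ++ _)).
  by elim: M => //= r M IH; rewrite !nonzeros_cat IH nonzeros_nseq0 cats0.
by elim: N => //= r N IH; rewrite !nonzeros_cat IH nonzeros_nseq0.
Qed.

Lemma Comp_eq_nil M : packed M -> (Comp M == [::]) = (M == [::]).
Proof.
case: M => // r M /andP[/andP[_ /= /andP[nz_r _]] _].
rewrite Comp_rowmat /= nonzeros_cat.
by case E: (nonzeros r) (nonzeros_eq_nil r) => //; rewrite nz_r.
Qed.

Lemma rectangularE N :
  rectangular N = all (fun k => k == head 0 (map size N)) (map size N).
Proof. by case: N => //= r N; rewrite all_map. Qed.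

Lemma size_rectangular N r : rectangular N -> r \in N -> size r = ncols N.
Proof. by move/allP=> rectN /rectN /eqP. Qed.

Lemma pmatE N : rectangular N ->
  pmat N = let R := filter nzrow N in
           let J := filter (fun j => nzrow (col R j)) (iota 0 (ncols N)) in
           if J is [::] then [::] else map (fun r => map (nth 0 r) J) R.
Proof.
move=> rectN /=; set R := filter nzrow N; set J := filter _ _.
have [R0|R_nil] := eqVneq R [::]; first by rewrite /pmat -/R R0; case: J.
have ncolsR : ncols R = ncols N.
  case ER: R R_nil => [|r R'] // _.
  have : r \in R by rewrite ER mem_head.
  by rewrite mem_filter => /andP[_ /(size_rectangular rectN)].
rewrite /pmat -/R /trmat ncolsR filter_map -/J.
case EJ: J => [|j J'] //=.
rewrite {1}/ncols /= size_map -[in RHS](mkseq_nth [::] R) /mkseq -map_comp.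
apply/eq_in_map => i; rewrite mem_iota add0n => /= iR.
rewrite /col -/(col _ _) /= -map_comp.
by congr cons; [|apply: eq_map => k /=]; rewrite (nth_map [::]).
Qed.

Lemma nonzeros_filter_nzrow N :
  nonzeros (flatten (filter nzrow N)) = nonzeros (flatten N).
Proof.
elim: N => //= r N IH; case: ifP => nz_r; rewrite /= !nonzeros_cat IH //.
by move: (nonzeros_eq_nil r); rewrite nz_r => /eqP ->.
Qed.

Lemma nonzeros_map_filter (f : nat -> nat) (P : pred nat) s :
  {in s, forall j, ~~ P j -> f j = 0} ->
  nonzeros (map f (filter P s)) = nonzeros (map f s).
Proof.
elim: s => //= j s IH f0.
have {}IH := IH (fun k ks => f0 k (mem_behead (s := j :: s) ks)).
case: ifP => Pj; rewrite /nonzeros /= -!/(nonzeros _) IH //.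
by rewrite f0 ?mem_head ?Pj.
Qed.

Lemma Comp_pmat N : rectangular N -> Comp (pmat N) = Comp N.
Proof.
move=> rectN; rewrite (pmatE rectN) /=.
set R := filter nzrow N; set J := filter _ _.
have same_word :
    nonzeros (flatten (map (fun r => map (nth 0 r) J) R)) = nonzeros (flatten N).
  rewrite -(nonzeros_filter_nzrow N) -/R !nonzeros_flatten -map_comp.
  congr flatten; apply/eq_in_map => r rR /=.
  have rN : r \in N by move: rR; rewrite mem_filter => /andP[].
  rewrite nonzeros_map_filter.
    by rewrite map_nth_iota0 -(size_rectangular rectN rN) ?take_size.
  move=> k _ /hasPn zero_col.
  have : nth 0 r k \in col R k by apply: (map_f (fun r => nth 0 r k) rR).
  by move/zero_col; rewrite lt0n negbK => /eqP.
rewrite !Comp_rowmat -same_word; case: J same_word => //= _.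
by elim: R.
Qed.

Lemma pmat_row r : pmat [:: r] = rowmat (nonzeros r).
Proof.
have rect : rectangular [:: r] by rewrite /rectangular /= eqxx.
rewrite (pmatE rect) /=; case: ifP => nz_r; last first.
  by move: (nonzeros_eq_nil r); rewrite nz_r => /eqP ->; case: (filter _ _).
set J := filter _ _.
have J_word : map (nth 0 r) J = nonzeros r.
  rewrite /J (@eq_filter _ _ (preim (nth 0 r) (fun a => 0 < a))); last first.
    by move=> j /=; rewrite /nzrow /= orbF.
  rewrite -filter_map /ncols /= map_nth_iota0 // take_size /nonzeros.
  by apply: eq_filter => a; rewrite lt0n.
by rewrite -J_word; case: J J_word.
Qed.

Lemma decomp_row_cons m r : decomp_row (m :: r) =
  flatten (map (fun i => map (fun x => (i :: x.1, (m - i) :: x.2)) (decomp_row r))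
               (iota 0 m.+1)).
Proof. by []. Qed.

Lemma decomp_cons r M : decomp (r :: M) =
  flatten (map (fun x => map (fun y => (x.1 :: y.1, x.2 :: y.2)) (decomp M))
               (decomp_row r)).
Proof. by []. Qed.

Lemma decomp_row1 r : decomp [:: r] = map (fun x => ([:: x.1], [:: x.2])) (decomp_row r).
Proof. by rewrite decomp_cons /=; elim: (decomp_row r) => //= x s ->. Qed.

Lemma size_decomp_row r x :
  x \in decomp_row r -> size x.1 = size r /\ size x.2 = size r.
Proof.
elim: r x => [|m r IH] x; first by rewrite inE => /eqP ->.
rewrite decomp_row_cons => /flatten_mapP[i _] /mapP[y /IH[sy1 sy2] ->] /=.
by rewrite sy1 sy2.
Qed.

Lemma size_decomp M d :
  d \in decomp M -> map size d.1 = map size M /\ map size d.2 = map size M.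
Proof.
elim: M d => [|r M IH] d; first by rewrite inE => /eqP ->.
rewrite decomp_cons => /flatten_mapP[x /size_decomp_row[sx1 sx2]].
by case/mapP=> y /IH[sy1 sy2] -> /=; rewrite sx1 sx2 sy1 sy2.
Qed.

Lemma flatten_map_flatten (A B : Type) (h : A -> seq B) (L : seq (seq A)) :
  flatten (map h (flatten L)) = flatten (map (fun l => flatten (map h l)) L).
Proof. by elim: L => //= l L IH; rewrite map_cat flatten_cat IH. Qed.

Lemma decomp_row_cat (T : Type) (F : seq nat -> seq nat -> T) r t :
  map (fun x => F x.1 x.2) (decomp_row (r ++ t)) =
  flatten (map (fun x => map (fun y => F (x.1 ++ y.1) (x.2 ++ y.2)) (decomp_row t))
               (decomp_row r)).
Proof.
elim: r F => [|m r IH] F; first by rewrite /= cats0.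
rewrite cat_cons !decomp_row_cons map_flatten flatten_map_flatten -!map_comp.
congr flatten; apply: eq_map => i /=; rewrite -!map_comp.
exact: (IH (fun a b => F (i :: a) ((m - i) :: b))).
Qed.

Lemma decomp_flatten (T : Type) (F : seq nat -> seq nat -> T) M :
  map (fun d => F (flatten d.1) (flatten d.2)) (decomp M) =
  map (fun x => F x.1 x.2) (decomp_row (flatten M)).
Proof.
elim: M F => [|r M IH] F //.
rewrite decomp_cons /= decomp_row_cat map_flatten -!map_comp.
congr flatten; apply: eq_map => x /=; rewrite -!map_comp.
exact: (IH (fun a b => F (x.1 ++ a) (x.2 ++ b))).
Qed.

Lemma decomp_row_nonzeros (T : Type) (F : seq nat -> seq nat -> T) r :
  map (fun x => F (nonzeros x.1) (nonzeros x.2)) (decomp_row r) =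
  map (fun x => F (nonzeros x.1) (nonzeros x.2)) (decomp_row (nonzeros r)).
Proof.
elim: r F => [|m r IH] F //.
case: m => [|m]; first by rewrite decomp_row_cons /= cats0 -map_comp; apply: IH.
rewrite [nonzeros _]/= !decomp_row_cons !map_flatten -!map_comp.
congr flatten; apply: eq_map => i /=; rewrite -!map_comp.
exact: (IH (fun a b => F (if i != 0 then i :: a else a)
                         (if m.+1 - i != 0 then (m.+1 - i) :: b else b))).
Qed.

Lemma Comp_pmat_decomp M : rectangular M ->
  map (fun d => (Comp (pmat d.1), Comp (pmat d.2))) (decomp M) =
  map (fun d => (pmat d.1, pmat d.2)) (decomp (Comp M)).
Proof.
move=> rectM.
have -> : map (fun d => (Comp (pmat d.1), Comp (pmat d.2))) (decomp M) =
    map (fun d => (rowmat (nonzeros (flatten d.1)), rowmat (nonzeros (flatten d.2))))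
        (decomp M).
  apply/eq_in_map => d /size_decomp[sd1 sd2].
  by rewrite !Comp_pmat ?Comp_rowmat // rectangularE ?sd1 ?sd2 -rectangularE.
rewrite (decomp_flatten (fun a b => (rowmat (nonzeros a), rowmat (nonzeros b)))).
rewrite (decomp_row_nonzeros (fun a b => (rowmat a, rowmat b))) Comp_rowmat.
case: (nonzeros (flatten M)) => [|a s] //.
by rewrite decomp_row1 -map_comp; apply: eq_map => x /=; rewrite !pmat_row.
Qed.

Lemma inHPack1_Theta x : inHPack1 (Theta x).
Proof.
rewrite /inHPack1 /Theta -map_comp all_map.
by apply/allP => p _; apply: pack1_Comp.
Qed.

Lemma Theta_mulPack x y : Theta (mulPack x y) = mulPack1 (Theta x) (Theta y).
Proof.
rewrite /Theta /mulPack /mulPack1 /bilin map_flatten -!map_comp; congr flatten.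
apply: eq_map => p /=; rewrite -!map_comp; apply: eq_map => q /=.
by rewrite Comp_diag.
Qed.

Lemma Theta2_coprod x : inHPack x -> Theta2 (coprod x) = coprod (Theta x).
Proof.
move=> Hx; rewrite /Theta2 /coprod /Theta map_flatten -!map_comp; congr flatten.
apply/eq_in_map => p px /=.
have rect : rectangular p.2.
  by move/allP: Hx => /(_ p.2 (map_f _ px)) /andP[/andP[]].
by have := congr1 (map (pair p.1)) (Comp_pmat_decomp rect); rewrite -!map_comp.
Qed.

Lemma counit_Theta x : inHPack x -> counit (Theta x) = counit x.
Proof.
rewrite /counit /coef /Theta big_map.
elim: x => [|p x IH] /=; first by rewrite !big_nil.
by case/andP=> packed_p Hx; rewrite !big_cons /= (Comp_eq_nil packed_p) IH.
Qed.

Theorem mainTheorem4 :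
  (forall x : fvs mat, inHPack x -> inHPack1 (Theta x)) /\
  (forall x y : fvs mat, inHPack x -> inHPack y ->
     Theta (mulPack x y) =v mulPack1 (Theta x) (Theta y)) /\
  Theta unitH =v unitH /\
  (forall x : fvs mat, inHPack x -> Theta2 (coprod x) =v coprod (Theta x)) /\
  (forall x : fvs mat, inHPack x -> counit (Theta x) = counit x).
Proof.
split; first by move=> x _; apply: inHPack1_Theta.
split; first by move=> x y _ _ b; rewrite Theta_mulPack.
split; first by [].
split; last exact: counit_Theta.
by move=> x Hx b; rewrite Theta2_coprod.
Qed.
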